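(* For every sketch $Q$ with $d$ parameter holes, every $v\in\mathbb{R}^d$, every $u\in\mathbb{R}^d_{>0}$, every trajectory $z$ of length $n$, and all indices $0\le i\le j\le n$, the $(i,j)$ entry of $[\![Q]\!]^M_{v,u}(z)$ equals $[\![Q]\!]^q_{v,u}(z_{i:j})$. In particular, $[\![Q]\!]^q_{v,u}(z)$ equals the $(0,n)$ entry of $[\![Q]\!]^M_{v,u}(z)$.
   Context: Fix a set $\mathcal{X}$ of states. A trajectory is a finite sequence $z=(x_0,\dots,x_{n-1})\in\mathcal{X}^*$ of length $n$; for $0\le i\le j\le n$, $z_{i:j}=(x_i,\dots,x_{j-1})$ (empty if $i=j$). Fix predicates of two kinds: a non-parametric predicate $\varphi$ has $\mathsf{sat}_\varphi:\mathcal{X}^*\to\{0,1\}$; a parametric predicate $\varphi$ has a bounded scoring function $\iota_\varphi:\mathcal{X}^*\to\mathbb{R}$. Sketches are generated by $Q::=\varphi_{??i}\mid\varphi\mid Q\,;\,Q\mid Q^k\mid Q\wedge Q$, where $\varphi_{??i}$ is a parametric predicate with a parameter hole labelled $i\in\{1,\dots,d\}$, $\varphi$ in the second case is non-parametric, and $Q^k$ ($k\ge1$) is $k$-fold sequencing $Q\,;\cdots;\,Q$. Quantitative semantics (values in $\mathbb{R}\cup\{\pm\infty\}$), for $v\in\mathbb{R}^d$, $u\in\mathbb{R}^d_{>0}$ and a trajectory $w$ of length $m$: $[\![\varphi_{??i}]\!]^q_{v,u}(w)=(\iota_\varphi(w)-v_i)/u_i$; $[\![\varphi]\!]^q_{v,u}(w)=\infty$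 if $\mathsf{sat}_\varphi(w)=1$ and $-\infty$ otherwise; $[\![Q_1\wedge Q_2]\!]^q_{v,u}(w)=\min\{[\![Q_1]\!]^q_{v,u}(w),[\![Q_2]\!]^q_{v,u}(w)\}$; $[\![Q_1\,;\,Q_2]\!]^q_{v,u}(w)=\max_{0\le k\le m}\min\{[\![Q_1]\!]^q_{v,u}(w_{0:k}),[\![Q_2]\!]^q_{v,u}(w_{k:m})\}$. Matrix semantics: for $z$ of length $n$, $[\![Q]\!]^M_{v,u}(z)$ is an $(n+1)\times(n+1)$ matrix over $\mathbb{R}\cup\{\pm\infty\}$ indexed by $0,\dots,n$: for $Q=\varphi_{??i}$ the $(i',j')$ entry is $(\iota_\varphi(z_{i':j'})-v_i)/u_i$ if $i'\le j'$ and $-\infty$ if $i'>j'$; for non-parametric $Q=\varphi$ the $(i',j')$ entry is $[\![\varphi]\!]^q_{v,u}(z_{i':j'})$ if $i'\le j'$ and $-\infty$ otherwise; $[\![Q_1\wedge Q_2]\!]^M_{v,u}(z)$ is the entrywise minimum of the two matrices; $[\![Q_1\,;\,Q_2]\!]^M_{v,u}(z)=A\cdot B$ with $A=[\![Q_1]\!]^M_{v,u}(z)$, $B=[\![Q_2]\!]^M_{v,u}(z)$ and $(A\cdot B)_{i',j'}=\max_{0\le k\le n}\min\{A_{i',k},B_{k,j'}\}$. *)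

From mathcomp Require Import all_boot all_order all_algebra.
From mathcomp Require Import reals constructive_ereal.
Set Implicit Arguments. Unset Strict Implicit. Unset Printing Implicit Defensive.
Import Order.TTheory GRing.Theory Num.Theory.
Local Open Scope ring_scope.
Local Open Scope ereal_scope.

Section Sketch.
Variables (R : realType) (X : Type) (d : nat).

(* Sketches with d parameter holes (holes labelled by 'I_d, i.e. 0..d-1,
   instead of 1..d).  Predicates are given by their semantic data:
   a parametric predicate by its scoring function iota, a non-parametric one
   by its satisfaction function sat. *)
Inductive sketch : Type :=
| SParam of (seq X -> R) & 'I_d
| SNonParam of (seq X -> bool)
| SSeq of sketch & sketch
| SPow of nat & sketch
| SAnd of sketch & sketch.

Fixpoint wf_sketch (Q : sketch) : Prop :=
  match Q with
  | SParam iota _ => exists M : R, forall w, (`|iota w| <= M)%R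
  | SNonParam _ => True
  | SSeq Q1 Q2 => wf_sketch Q1 /\ wf_sketch Q2
  | SPow k Q1 => (1 <= k)%N /\ wf_sketch Q1
  | SAnd Q1 Q2 => wf_sketch Q1 /\ wf_sketch Q2
  end.

Definition slice (z : seq X) (i j : nat) : seq X := take (j - i) (drop i z).

Definition qseq (f g : seq X -> \bar R) (w : seq X) : \bar R :=
  \big[maxe/-oo]_(0 <= k < (size w).+1)
     mine (f (slice w 0 k)) (g (slice w k (size w))).

(* k-fold sequencing f ; ... ; f  (only meaningful for k >= 1) *)
Fixpoint qpow (k : nat) (f : seq X -> \bar R) : seq X -> \bar R :=
  match k with
  | 0 | 1 => f
  | k'.+1 => qseq f (qpow k' f)
  end.

Fixpoint qsem (v u : 'I_d -> R) (Q : sketch) (w : seq X) : \bar R :=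
  match Q with
  | SParam iota i => ((iota w - v i) / u i)%R%:E
  | SNonParam sat => if sat w then +oo else -oo
  | SSeq Q1 Q2 => qseq (qsem v u Q1) (qsem v u Q2) w
  | SPow k Q1 => qpow k (qsem v u Q1) w
  | SAnd Q1 Q2 => mine (qsem v u Q1 w) (qsem v u Q2 w)
  end.

Definition mmul (m : nat) (A B : 'M[\bar R]_m) : 'M[\bar R]_m :=
  \matrix_(i < m, j < m) \big[maxe/-oo]_(k < m) mine (A i k) (B k j).

Fixpoint mpow (m : nat) (k : nat) (A : 'M[\bar R]_m) : 'M[\bar R]_m :=
  match k with
  | 0 | 1 => A
  | k'.+1 => mmul A (mpow k' A)
  end.

Fixpoint msem (v u : 'I_d -> R) (Q : sketch) (z : seq X)
  : 'M[\bar R]_((size z).+1) :=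
  match Q with
  | SParam iota i =>
      \matrix_(i' < (size z).+1, j' < (size z).+1)
        if (i' <= j')%N then ((iota (slice z i' j') - v i) / u i)%R%:E
        else -oo
  | SNonParam sat =>
      \matrix_(i' < (size z).+1, j' < (size z).+1)
        if (i' <= j')%N then (if sat (slice z i' j') then +oo else -oo)
        else -oo
  | SSeq Q1 Q2 => mmul (msem v u Q1 z) (msem v u Q2 z)
  | SPow k Q1 => mpow k (msem v u Q1 z)
  | SAnd Q1 Q2 =>
      \matrix_(i' < (size z).+1, j' < (size z).+1)
        mine (msem v u Q1 z i' j') (msem v u Q2 z i' j')
  end.

End Sketch.

(* The matrix of a sketch is upper triangular (entries -oo below the diagonal)
   and its (i, j) entry is the quantitative value on z_{i:j}; this invariant is
   preserved by every constructor.  For sequencing, the (max, min) product at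
   (i, j) ranges over all middle indices k, but only i <= k <= j contribute
   (the others meet a -oo entry), and those are exactly the split points of
   z_{i:j} into z_{i:k} and z_{k:j}. *)

Set Warnings "-notation-overridden,-ambiguous-paths".
From mathcomp Require Import all_boot all_order all_algebra.
From mathcomp Require Import reals constructive_ereal.
Set Implicit Arguments. Unset Strict Implicit. Unset Printing Implicit Defensive.
Import Order.TTheory GRing.Theory Num.Theory.
Local Open Scope ring_scope.
Local Open Scope ereal_scope.

Lemma big_nat_idx_outside (T : Type) (idx : T) (op : Monoid.law idx)
    (lo hi n : nat) (F : nat -> T) :
  (lo <= hi <= n)%N ->
  (forall k, (k < n)%N -> (k < lo)%N || (hi <= k)%N -> F k = idx) ->
  \big[op/idx]_(0 <= k < n) F k = \big[op/idx]_(lo <= k < hi) F k.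
Proof.
move=> /andP[lo_hi hi_n] F_out; have lo_n := leq_trans lo_hi hi_n.
have big_out a b : (b <= n)%N -> (b <= lo)%N || (hi <= a)%N ->
    \big[op/idx]_(a <= k < b) F k = idx.
  move=> b_n ab_out; rewrite big1_seq // => k /andP[_].
  rewrite mem_index_iota => /andP[a_k k_b]; apply: F_out; first exact: leq_trans k_b b_n.
  case/orP: ab_out => [b_lo|hi_a]; first by rewrite (leq_trans k_b b_lo).
  by rewrite (leq_trans hi_a a_k) orbT.
rewrite (big_cat_nat _ (n := lo)) //= big_out ?leqnn // Monoid.mul1m.
by rewrite (big_cat_nat _ (n := hi)) //= [X in op _ X]big_out ?leqnn ?orbT // Monoid.mulm1.
Qed.

Lemma slice_full (X : Type) (z : seq X) : slice z 0 (size z) = z.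
Proof. by rewrite /slice drop0 subn0 take_size. Qed.

Lemma size_slice (X : Type) (z : seq X) i j :
  (j <= size z)%N -> size (slice z i j) = (j - i)%N.
Proof.
move=> le_jz; rewrite size_take size_drop.
by case: ltnP => // ge; apply/eqP; rewrite eqn_leq ge leq_sub2r.
Qed.

Lemma slice_slice (X : Type) (z : seq X) i j a b :
  (a <= b <= j - i)%N -> slice (slice z i j) a b = slice z (i + a) (i + b).
Proof.
case/andP=> le_ab le_b; have le_a := leq_trans le_ab le_b.
rewrite /slice -(subnK le_a) -take_drop take_takel ?drop_drop ?subnDl ?(addnC a i) //.
by rewrite leq_sub2r.
Qed.

Section MatrixRepresentation.
Variables (R : realType) (X : Type) (z : seq X).
Local Notation n := (size z).

Definition represents (A : 'M[\bar R]_n.+1) (f : seq X -> \bar R) : Prop :=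
  (forall i j : 'I_n.+1, (i <= j)%N -> A i j = f (slice z i j)) /\
  (forall i j : 'I_n.+1, (j < i)%N -> A i j = -oo).

Lemma represents_upper (f : seq X -> \bar R) :
  represents (\matrix_(i, j) if (i <= j)%N then f (slice z i j) else -oo) f.
Proof. by split=> i j ij; rewrite mxE ?ij // leqNgt ij. Qed.

Lemma represents_mine A B f g : represents A f -> represents B g ->
  represents (\matrix_(i, j) mine (A i j) (B i j)) (fun w => mine (f w) (g w)).
Proof.
move=> [A_up A_low] [B_up B_low]; split=> i j ij; rewrite mxE.
  by rewrite A_up ?B_up.
by rewrite A_low ?minNye.
Qed.

Lemma represents_mmul A B f g : represents A f -> represents B g ->
  represents (mmul A B) (qseq f g).
Proof.
move=> [A_up A_low] [B_up B_low]; split=> i j ij; last first.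
  rewrite mxE big1 // => k _; have [ki|ik] := ltnP k i; first by rewrite A_low ?minNye.
  by rewrite B_low ?mineNy // (leq_trans ij ik).
have le_jn : (j <= n)%N by rewrite -ltnS.
pose G k := mine (A i (inord k)) (B (inord k) j).
have only_i_to_j : \big[maxe/-oo]_(k < n.+1) mine (A i k) (B k j) =
                   \big[maxe/-oo]_(i <= k < j.+1) G k.
  rewrite (eq_bigr (G \o val)) => [|k _]; last by rewrite /G /= inord_val.
  rewrite -(big_mkord xpredT G) (@big_nat_idx_outside _ _ _ i j.+1) //.
    by rewrite (leqW ij) ltn_ord.
  move=> k k_n /orP[ki|jk]; rewrite /G.
    by rewrite A_low ?minNye // inordK.
  by rewrite B_low ?mineNy // inordK.
(* Reindex the split point k of z_{i:j} as the middle index i + k of the product. *)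
rewrite mxE /qseq size_slice // only_i_to_j -{1}(add0n i) big_addn subSn //.
apply: (@eq_big_nat _ -oo maxe) => k /andP[_]; rewrite ltnS => kji.
have kij : (k + i <= j)%N by rewrite addnC -leq_subRL.
have kin : (k + i < n.+1)%N by apply: leq_ltn_trans kij (ltn_ord j).
rewrite /G A_up ?B_up ?inordK ?leq_addl // !slice_slice ?kji ?leqnn //.
by rewrite addn0 (addnC i k) subnKC.
Qed.

Lemma represents_mpow k A f : represents A f -> represents (mpow k A) (qpow k f).
Proof. by move=> Af; elim: k => [|[|k] IH] //=; apply: represents_mmul. Qed.

End MatrixRepresentation.

Lemma represents_msem (R : realType) (X : Type) (d : nat) (Q : sketch R X d) v u z :
  represents (msem v u Q z) (qsem v u Q).
Proof.
elim: Q => [iota i|sat|Q1 IH1 Q2 IH2|k Q1 IH|Q1 IH1 Q2 IH2] /=.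
- exact: (represents_upper z (fun w => ((iota w - v i) / u i)%R%:E)).
- exact: (represents_upper z (fun w => if sat w then +oo else -oo)).
- exact: represents_mmul.
- exact: represents_mpow.
- exact: represents_mine.
Qed.

Local Close Scope ereal_scope.
Theorem theorem4 (R : realType) (X : Type) (d : nat) (Q : sketch R X d) :
  wf_sketch Q ->
  forall (v u : 'I_d -> R), (forall i, 0 < u i) ->
  forall (z : seq X),
    (forall i j : 'I_(size z).+1, (i <= j)%N ->
       msem v u Q z i j = qsem v u Q (slice z i j)) /\
    qsem v u Q z = msem v u Q z ord0 ord_max.
Proof.
move=> _ v u _ z; have [Q_up _] := represents_msem Q v u z.
by split=> //; rewrite Q_up // slice_full.
Qed.
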